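(* Let $\mathcal L$ be a choice logic and let $m$ be a degree obtainable in $\mathcal L$. Then there is an $\mathcal L$-formula $F$ such that $\deg_{\mathcal L}(\mathcal I,F)=m$ for every interpretation $\mathcal I$.
   Context: Fix a countably infinite set $\mathcal U$ of propositional variables. Let $\mathbb N=\{1,2,3,\dots\}$ and $\overline{\mathbb N}=\mathbb N\cup\{\infty\}$, with $n<\infty$ for all $n\in\mathbb N$. An interpretation is a set $\mathcal I\subseteq\mathcal U$ (the variables set to true). A choice logic $\mathcal L$ is specified by a finite set $C_{\mathcal L}$ of binary connective symbols disjoint from $\{\neg,\land,\lor\}$ and, for each $\circ\in C_{\mathcal L}$, a function $\mathrm{opt}_\circ:\mathbb N^2\to\mathbb N$ with $\mathrm{opt}_\circ(k,\ell)\le (k+1)(\ell+1)$ for all $k,\ell$, and a function $\deg_\circ:\mathbb N^2\times\overline{\mathbb N}^2\to\overline{\mathbb N}$ such that for all $k,\ell\in\mathbb N$, $m,n\in\overline{\mathbb N}$, either $\deg_\circ(k,\ell,m,n)\le \mathrm{opt}_\circ(k,\ell)$ or $\deg_\circ(k,\ell,m,n)=\infty$. The $\mathcal L$-formulas are built from variables in $\mathcal U$ using unary $\neg$ and binary $\land,\lor$ and the connectives in $C_{\mathcal L}$. The optionality $\mathrm{opt}_{\mathcal L}$ of formulas is defined by: $\mathrm{opt}_{\mathcal L}(a)=1$ for $a\in\mathcal U$; $\mathrm{opt}_{\mathcal L}(\neg F)=1$; $\mathrm{opt}_{\mathcal L}(F\land G)=\mathrm{opt}_{\mathcal L}(F\lor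 G)=\max(\mathrm{opt}_{\mathcal L}(F),\mathrm{opt}_{\mathcal L}(G))$; $\mathrm{opt}_{\mathcal L}(F\circ G)=\mathrm{opt}_\circ(\mathrm{opt}_{\mathcal L}(F),\mathrm{opt}_{\mathcal L}(G))$ for $\circ\in C_{\mathcal L}$. The satisfaction degree $\deg_{\mathcal L}(\mathcal I,F)\in\overline{\mathbb N}$ is defined by: $\deg_{\mathcal L}(\mathcal I,a)=1$ if $a\in\mathcal I$ and $\infty$ otherwise; $\deg_{\mathcal L}(\mathcal I,\neg F)=1$ if $\deg_{\mathcal L}(\mathcal I,F)=\infty$ and $\infty$ otherwise; $\deg_{\mathcal L}(\mathcal I,F\land G)=\max(\deg_{\mathcal L}(\mathcal I,F),\deg_{\mathcal L}(\mathcal I,G))$; $\deg_{\mathcal L}(\mathcal I,F\lor G)=\min(\deg_{\mathcal L}(\mathcal I,F),\deg_{\mathcal L}(\mathcal I,G))$; $\deg_{\mathcal L}(\mathcal I,F\circ G)=\deg_\circ(\mathrm{opt}_{\mathcal L}(F),\mathrm{opt}_{\mathcal L}(G),\deg_{\mathcal L}(\mathcal I,F),\deg_{\mathcal L}(\mathcal I,G))$ for $\circ\in C_{\mathcal L}$. A degree $m\in\overline{\mathbb N}$ is obtainable in $\mathcal L$ if there exist an interpretation $\mathcal I$ and an $\mathcal L$-formula $G$ with $\deg_{\mathcal L}(\mathcal I,G)=m$; $\mathrm{Obt}(\mathcal L)$ denotes the set of obtainable degrees. *)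

From mathcomp Require Import all_boot.
Set Implicit Arguments. Unset Strict Implicit. Unset Printing Implicit Defensive.

(* Propositional variables: U := nat (countably infinite).
   Positive naturals N are represented by nat values >= 1 (hypotheses below
   guarantee that only such values ever arise).
   Degrees in N-bar := option nat, with [Some k] = k (k >= 1) and [None] = infinity. *)
Definition degree := option nat.
Definition inf : degree := None.

Definition interpretation := nat -> bool.

Definition dmax (a b : degree) : degree :=
  match a, b with
  | Some x, Some y => Some (maxn x y)
  | _, _ => None
  end.
Definition dmin (a b : degree) : degree :=
  match a, b with
  | Some x, Some y => Some (minn x y)
  | Some x, None => Some x
  | None, Some y => Some y
  | None, None => None
  end.

Definition valid_deg (d : degree) : Prop :=
  match d with Some k => 1 <= k | None => True end.

Record choice_logic := ChoiceLogic {
  conn : finType;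
  opt_c : conn -> nat -> nat -> nat;
  deg_c : conn -> nat -> nat -> degree -> degree -> degree
}.

(* The conditions of the definition (restricted to arguments in N / N-bar). *)
Definition is_choice_logic (L : choice_logic) : Prop :=
  forall c : conn L,
    (forall k l, 1 <= k -> 1 <= l ->
       1 <= opt_c c k l /\ opt_c c k l <= k.+1 * l.+1) /\
    (forall k l m n, 1 <= k -> 1 <= l -> valid_deg m -> valid_deg n ->
       deg_c c k l m n = None \/
       exists d, deg_c c k l m n = Some d /\ 1 <= d /\ d <= opt_c c k l).

Inductive formula (C : Type) : Type :=
  | FVar : nat -> formula C
  | FNeg : formula C -> formula C
  | FAnd : formula C -> formula C -> formula C
  | FOr  : formula C -> formula C -> formula C
  | FConn : C -> formula C -> formula C -> formula C.

Fixpoint optL (L : choice_logic) (F : formula (conn L)) : nat :=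
  match F with
  | FVar _ => 1
  | FNeg _ => 1
  | FAnd F G => maxn (optL F) (optL G)
  | FOr F G => maxn (optL F) (optL G)
  | FConn c F G => opt_c c (optL F) (optL G)
  end.

Fixpoint degL (L : choice_logic) (I : interpretation) (F : formula (conn L))
  : degree :=
  match F with
  | FVar a => if I a then Some 1 else None
  | FNeg F => match degL I F with None => Some 1 | Some _ => None end
  | FAnd F G => dmax (degL I F) (degL I G)
  | FOr F G => dmin (degL I F) (degL I G)
  | FConn c F G => deg_c c (optL F) (optL G) (degL I F) (degL I G)
  end.

Definition obtainable (L : choice_logic) (m : degree) : Prop :=
  exists (I : interpretation) (G : formula (conn L)), degL I G = m.

From mathcomp Require Import all_boot.

(* Suppose deg(I, G) = m.  Replace each variable a of G by a constant
   formula: the tautology  x0 \/ ~x0  (degree 1 everywhere) if a is in I,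
   and the contradiction  x0 /\ ~x0  (degree infinity everywhere) otherwise.
   Both constants have optionality 1, exactly like a variable.  Since the
   optionality of a formula never depends on the interpretation and the
   degree of a compound formula is computed from the optionalities and
   degrees of its immediate subformulas only, a structural induction shows
   that, under every interpretation J, the substituted formula has the
   degree that G has under I. *)

Section Substitution.

Variable L : choice_logic.

Fixpoint subst (sigma : nat -> formula (conn L)) (F : formula (conn L))
  : formula (conn L) :=
  match F with
  | FVar a => sigma a
  | FNeg F => FNeg (subst sigma F)
  | FAnd F G => FAnd (subst sigma F) (subst sigma G)
  | FOr F G => FOr (subst sigma F) (subst sigma G)
  | FConn c F G => FConn c (subst sigma F) (subst sigma G)
  end.

Lemma optL_subst (sigma : nat -> formula (conn L)) (F : formula (conn L)) :
  (forall a, optL (sigma a) = 1) -> optL (subst sigma F) = optL F.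
Proof.
move=> opt1; elim: F => [a|F _|F IHF G IHG|F IHF G IHG|c F IHF G IHG] //=;
  by rewrite IHF IHG.
Qed.

Lemma degL_subst (sigma : nat -> formula (conn L)) (I J : interpretation)
    (F : formula (conn L)) :
  (forall a, optL (sigma a) = 1) ->
  (forall a, degL J (sigma a) = degL I (FVar (conn L) a)) ->
  degL J (subst sigma F) = degL I F.
Proof.
move=> opt1 deg_sigma.
elim: F => [a|F IH|F IHF G IHG|F IHF G IHG|c F IHF G IHG] /=.
- exact: deg_sigma.
- by rewrite IH.
- by rewrite IHF IHG.
- by rewrite IHF IHG.
- by rewrite IHF IHG !optL_subst.
Qed.

Definition const_formula (b : bool) : formula (conn L) :=
  if b then FOr (FVar _ 0) (FNeg (FVar _ 0))
  else FAnd (FVar _ 0) (FNeg (FVar _ 0)).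

Lemma optL_const_formula (b : bool) : optL (const_formula b) = 1.
Proof. by case: b. Qed.

Lemma degL_const_formula (J : interpretation) (b : bool) :
  degL J (const_formula b) = if b then Some 1 else None.
Proof. by case: b => /=; case: (J 0). Qed.

End Substitution.

Theorem mainTheorem3 (L : choice_logic) (HL : is_choice_logic L) (m : degree) :
  obtainable L m ->
  exists F : formula (conn L), forall I : interpretation, degL I F = m.
Proof.
move=> [I [G <-]].
exists (subst L (fun a => const_formula L (I a)) G) => J.
apply: degL_subst => a; first exact: optL_const_formula.
exact: degL_const_formula.
Qed.
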